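(* Let $\sigma,\widehat\sigma\in\Omega$ be such that the transition probability $\mathbb P(\widehat\sigma\to\sigma)$ in the auxiliary TASEP is positive. Then for each $\mu\in S_\lambda$, \[\sum_{\widehat\mu\in S_\lambda}\mathbb P\big((\widehat\mu,\widehat\sigma)\to(\mu,\sigma)\big)\,F_{\widehat\mu}(\widehat\sigma\boldsymbol\chi;t)=F_\mu(\sigma\boldsymbol\chi;t)\,\mathbb P(\widehat\sigma\to\sigma),\] where the transition probabilities on the left are those of $\blacktriangle\mathrm{ASEP}_\lambda$.
   Context: ASEP polynomials: $\lambda=(\lambda_1\le\cdots\le\lambda_n)$ nonnegative integers, $S_\lambda$ its rearrangements; $wy=(y_{w^{-1}(1)},\dots,y_{w^{-1}(n)})$ for $w\in\mathfrak S_n$, $(wf)(\mathbf x)=f(w\mathbf x)$; indices mod $n$; $\overline s_i$ ($i\in\mathbb Z/n\mathbb Z$) the transposition of $i,i+1$; $c=(1\,2\cdots n)$; $T_i=t-\frac{tx_i-x_{i+1}}{x_i-x_{i+1}}(1-\overline s_i)$. $(F_\mu(\mathbf x;t))_{\mu\in S_\lambda}$ is the unique family of homogeneous polynomials in $\mathbb C(t)[\mathbf x]$ with coefficient of $x_1^{\lambda_n-\lambda_1}\cdots x_n^{\lambda_n-\lambda_n}$ in $F_\lambda$ equal to $1$ and: $T_iF_\mu=F_{\overline s_i\mu}$ if $\mu_i<\mu_{i+1}$; $\overline s_iF_\mu=F_\mu$ if $\mu_i=\mu_{i+1}$; $cF_{c\mu}=F_\mu$. $\mathfrak f_r(k,k')=1$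 if $k>k'$, $r$ if $k<k'$, $0$ if $k=k'$. Stoned multispecies ASEP: $t\in[0,1)$; stones $\blacktriangle_1,\dots,\blacktriangle_n$, surjective densities $\varrho:\{\blacktriangle_j\}\to[m]$ ($m\ge2$) with $1=\varrho(\blacktriangle_1)\le\cdots\le\varrho(\blacktriangle_n)=m$. $\Omega$: the $\sigma\in\mathfrak S_n$ such that, for each density $k$, stones of density $k$ occur in the same cyclic order in $\blacktriangle_{\sigma^{-1}(1)},\dots,\blacktriangle_{\sigma^{-1}(n)}$ as in $\blacktriangle_1,\dots,\blacktriangle_n$. $\mathfrak K(\sigma)=\#\{i:\varrho(\blacktriangle_{\sigma^{-1}(i)})<\varrho(\blacktriangle_{\sigma^{-1}(i+1)})\}$. Auxiliary TASEP on $\Omega$: $\mathbb P(\sigma\to\overline s_i\sigma)=1/n$ if $\varrho(\blacktriangle_{\sigma^{-1}(i)})<\varrho(\blacktriangle_{\sigma^{-1}(i+1)})$, $\mathbb P(\sigma\to\sigma)=1-\mathfrak K(\sigma)/n$, others $0$. $\boldsymbol\chi=(\chi_1,\dots,\chi_n)$ nonzero reals with $p(j,j'):=\frac{\chi_j-\chi_{j'}}{t\chi_j-\chi_{j'}}\in[0,1)$ whenever $\varrho(\blacktriangle_j)<\varrho(\blacktriangle_{j'})$. $\blacktriangle\mathrm{ASEP}_\lambda$ on $S_\lambda\times\Omega$: if $\varrho(\blacktriangle_{\sigma^{-1}(i)})<\varrho(\blacktriangle_{\sigma^{-1}(i+1)})$ and $\mu_i\ne\mu_{i+1}$, then $\mathbb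 P((\mu,\sigma)\to(\overline s_i\mu,\overline s_i\sigma))=\frac1np(\sigma^{-1}(i),\sigma^{-1}(i+1))\mathfrak f_t(\mu_i,\mu_{i+1})$ and $\mathbb P((\mu,\sigma)\to(\mu,\overline s_i\sigma))=\frac1n[1-p(\sigma^{-1}(i),\sigma^{-1}(i+1))\mathfrak f_t(\mu_i,\mu_{i+1})]$; if the density condition holds and $\mu_i=\mu_{i+1}$, $\mathbb P((\mu,\sigma)\to(\mu,\overline s_i\sigma))=\frac1n$; $\mathbb P((\mu,\sigma)\to(\mu,\sigma))=1-\mathfrak K(\sigma)/n$; all others $0$. *)

From HB Require Import structures.
From mathcomp Require Import all_boot all_order all_algebra all_fingroup.
From mathcomp Require Import fraction mpoly complex.
From Stdlib Require Import ClassicalEpsilon.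

Set Implicit Arguments.
Unset Strict Implicit.
Unset Printing Implicit Defensive.

Import Order.TTheory GRing.Theory Num.Theory.
Local Open Scope ring_scope.

Local Notation "x %:F" := (FracField.tofrac x).

(* C(t) : rational functions in the indeterminate t over C = R[i]. *)
Definition Kt (R : rcfType) := {fraction {poly complex R}}.

Definition tK (R : rcfType) : Kt R := ('X : {poly complex R})%:F.

Definition regular_at (R : rcfType) (c : complex R) (r : Kt R) : Prop :=
  exists pq : {poly complex R} * {poly complex R},
    pq.2.[c] != 0 /\ r = pq.1%:F / pq.2%:F.

Definition eval_at (R : rcfType) (c : complex R) (r : Kt R) : complex R :=
  let pq := epsilon (inhabits (0, 1))
     (fun pq : {poly complex R} * {poly complex R} =>
        pq.2.[c] != 0 /\ r = pq.1%:F / pq.2%:F) in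
  pq.1.[c] / pq.2.[c].

(* F(v ; c) for F in C(t)[x_1..x_n], v in C^n, c in C *)
Definition evalF (R : rcfType) (n : nat) (c : complex R) (v : 'I_n -> complex R)
  (p : {mpoly Kt R [n]}) : complex R :=
  \sum_(m <- msupp p) eval_at c p@_m * \prod_(i < n) v i ^+ m i.

(* Actions of permutations (indices are 0-based and taken mod n)       *)

Definition sbar (n : nat) (i : 'I_n) : 'S_n := tperm i (ordS i).

Definition cyc (n : nat) : 'S_n := perm (@ordS_inj n).

Definition sact (n : nat) (w : 'S_n) (mu : seq nat) : seq nat :=
  [seq nth 0%N mu (w^-1%g i) | i <- enum 'I_n].

(* (w f)(x) = f(w x) *)
Definition pact (R : rcfType) (n : nat) (w : 'S_n) (f : {mpoly Kt R [n]}) :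
  {mpoly Kt R [n]} :=
  f \mPo [tuple 'X_(w^-1%g i) | i < n].

(* T_i f = g, with the denominator x_i - x_{i+1} cleared:
   T_i f = t f - (t x_i - x_{i+1})/(x_i - x_{i+1}) (f - sbar_i f) *)
Definition Trel (R : rcfType) (n : nat) (i : 'I_n) (f g : {mpoly Kt R [n]}) : Prop :=
  ('X_i - 'X_(ordS i)) * ((tK R)%:MP * f - g)
  = ((tK R)%:MP * 'X_i - 'X_(ordS i)) * (f - pact (sbar i) f).

Definition asep_family (R : rcfType) (n : nat) (lambda : seq nat)
  (F : seq nat -> {mpoly Kt R [n]}) : Prop :=
  [/\ forall mu, perm_eq mu lambda -> exists d, F mu \is d.-homog,
      (F lambda)@_[multinom (nth 0 lambda n.-1 - nth 0 lambda i)%N | i < n] = 1,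
      forall mu (i : 'I_n), perm_eq mu lambda ->
        (nth 0 mu i < nth 0 mu (ordS i))%N ->
        Trel i (F mu) (F (sact (sbar i) mu)),
      forall mu (i : 'I_n), perm_eq mu lambda ->
        nth 0 mu i = nth 0 mu (ordS i) -> pact (sbar i) (F mu) = F mu
    & forall mu, perm_eq mu lambda -> pact (cyc n) (F (sact (cyc n) mu)) = F mu].

(* sigma in Omega: for each density k, the stones of density k occur in
   the same cyclic order in (stone_{sigma^-1(1)},...,stone_{sigma^-1(n)})
   as in (stone_1, ..., stone_n), i.e. the two subsequences are rotations *)
Definition in_Omega (n : nat) (rho : 'I_n -> nat) (s : 'S_n) : Prop :=
  forall k : nat, exists r : nat,
    [seq j <- [seq s^-1%g i | i <- enum 'I_n] | rho j == k]
    = rot r [seq j <- enum 'I_n | rho j == k].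

Definition asc (n : nat) (rho : 'I_n -> nat) (s : 'S_n) (i : 'I_n) : bool :=
  (rho (s^-1%g i) < rho (s^-1%g (ordS i)))%N.

Definition Kcount (n : nat) (rho : 'I_n -> nat) (s : 'S_n) : nat :=
  #|[set i | asc rho s i]|.

(* sbar_i sigma (composition of maps; mathcomp's s * t is "s then t") *)
Definition lmul (n : nat) (i : 'I_n) (s : 'S_n) : 'S_n := (s * sbar i)%g.

Definition aux_prob (R : rcfType) (n : nat) (rho : 'I_n -> nat) (s s' : 'S_n) : R :=
  (if s' == s then 1 - (Kcount rho s)%:R / n%:R else 0)
  + \sum_(i < n | asc rho s i) (if s' == lmul i s then n%:R^-1 else 0).

Definition pfun (R : rcfType) (n : nat) (t : R) (chi : 'I_n -> R) (j j' : 'I_n) : R :=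
  (chi j - chi j') / (t * chi j - chi j').

Definition ff (R : rcfType) (r : R) (k k' : nat) : R :=
  if (k' < k)%N then 1 else if (k < k')%N then r else 0.

Definition asep_prob (R : rcfType) (n : nat) (rho : 'I_n -> nat) (chi : 'I_n -> R)
  (t : R) (mh : seq nat) (sh : 'S_n) (mu : seq nat) (s : 'S_n) : R :=
  (if (mu == mh) && (s == sh) then 1 - (Kcount rho sh)%:R / n%:R else 0)
  + \sum_(i < n | asc rho sh i)
      (let p := pfun t chi (sh^-1%g i) (sh^-1%g (ordS i)) in
       let a := nth 0%N mh i in
       let b := nth 0%N mh (ordS i) in
       if a != b then
         (if (mu == sact (sbar i) mh) && (s == lmul i sh)
          then n%:R^-1 * p * ff t a b else 0)
         + (if (mu == mh) && (s == lmul i sh)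
            then n%:R^-1 * (1 - p * ff t a b) else 0)
       else (if (mu == mh) && (s == lmul i sh) then n%:R^-1 else 0)).

Definition spt (R : rcfType) (n : nat) (chi : 'I_n -> R) (s : 'S_n) : 'I_n -> complex R :=
  fun i => (chi (s^-1%g i))%:C%C.

(* If sigma = sigmah, only the staying transition (mu, sigmah) -> (mu, sigmah) contributes on
   either side.  Otherwise sigma = s_i sigmah for a density ascent i, and the left-hand side only
   involves F_mu and F_{s_i mu} at the point x = sigmah chi, while the right-hand side is F_mu at
   s_i x divided by n.  The swap rate p = (x_i - x_{i+1}) / (t x_i - x_{i+1}) is precisely the
   coefficient occurring in the Demazure-Lusztig operator T_i, so the required two-term identity
   is the exchange relation T_i F_mu = F_{s_i mu} evaluated at x (if mu_i < mu_{i+1}), the same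
   relation for s_i mu evaluated at x and at s_i x (if mu_i > mu_{i+1}), or the symmetry
   s_i F_mu = F_mu (if mu_i = mu_{i+1}).  Specialising t is a ring morphism on coefficients that
   are regular at t, which is how these identities in C(t)[x] descend to numbers. *)

From mathcomp Require Import all_boot all_order all_algebra all_fingroup.
From mathcomp Require Import fraction mpoly complex.
From Stdlib Require Import ClassicalEpsilon.
From mathcomp Require Import ring zify ssrcomplements.

Set Implicit Arguments.
Unset Strict Implicit.
Unset Printing Implicit Defensive.

Import Order.TTheory GRing.Theory Num.Theory.
Local Open Scope ring_scope.
Local Notation "x %:F" := (FracField.tofrac x).

Section Specialization.
Variables (R : rcfType) (c : complex R).
Local Notation P := {poly complex R}.
Implicit Types (p q : P) (r : Kt R).

Lemma tofrac_neq0_at p : p.[c] != 0 -> p%:F != 0.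
Proof. by rewrite tofrac_eq0; apply: contraNneq => ->; rewrite horner0. Qed.

(* [eval_at] evaluates an arbitrary representation chosen by [epsilon]; all representations
   regular at [c] agree there. *)
Lemma eval_at_frac p q : q.[c] != 0 -> eval_at c (p%:F / q%:F) = p.[c] / q.[c].
Proof.
move=> qc0; rewrite /eval_at.
set Pr := (fun pq : P * P => pq.2.[c] != 0 /\ p%:F / q%:F = pq.1%:F / pq.2%:F).
have [pq2c0 Epq] := @epsilon_spec _ (inhabits (0, 1)) Pr (ex_intro _ (p, q) (conj qc0 erefl)).
set pq := epsilon _ _ in pq2c0 Epq *.
have E : p * pq.2 = pq.1 * q.
  by apply/eqP; rewrite -tofrac_eq !tofracM -eqr_div ?tofrac_neq0_at // Epq.
by apply/eqP; rewrite eqr_div // -!hornerM E.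
Qed.

Lemma regular_at_poly p : regular_at c p%:F.
Proof. by exists (p, 1); rewrite /= hornerC oner_neq0 tofrac1 divr1. Qed.

Lemma eval_at_poly p : eval_at c p%:F = p.[c].
Proof.
have -> : p%:F = p%:F / 1%:F by rewrite tofrac1 divr1.
by rewrite eval_at_frac ?hornerC ?oner_neq0 // divr1.
Qed.

Lemma regular_at_nat k : regular_at c k%:R.
Proof. by rewrite -(rmorph_nat (@FracField.tofrac _)); apply: regular_at_poly. Qed.

Lemma eval_at_nat k : eval_at c k%:R = k%:R.
Proof. by rewrite -(rmorph_nat (@FracField.tofrac _)) eval_at_poly hornerMn -polyC1 hornerC. Qed.

Lemma regular_at_tK : regular_at c (tK R).
Proof. exact: regular_at_poly. Qed.

Lemma eval_at_tK : eval_at c (tK R) = c.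
Proof. by rewrite eval_at_poly hornerX. Qed.

Lemma regular_eval_atD r1 r2 : regular_at c r1 -> regular_at c r2 ->
  regular_at c (r1 + r2) /\ eval_at c (r1 + r2) = eval_at c r1 + eval_at c r2.
Proof.
move=> [[p1 q1] /= [q1c0 ->]] [[p2 q2] /= [q2c0 ->]].
have E : p1%:F / q1%:F + p2%:F / q2%:F = (p1 * q2 + p2 * q1)%:F / (q1 * q2)%:F.
  by rewrite tofracD !tofracM addf_div ?tofrac_neq0_at.
have qc0 : (q1 * q2).[c] != 0 by rewrite hornerM mulf_neq0.
split; first by exists (p1 * q2 + p2 * q1, q1 * q2).
by rewrite E !eval_at_frac // hornerD !hornerM addf_div.
Qed.

Lemma regular_eval_atM r1 r2 : regular_at c r1 -> regular_at c r2 ->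
  regular_at c (r1 * r2) /\ eval_at c (r1 * r2) = eval_at c r1 * eval_at c r2.
Proof.
move=> [[p1 q1] /= [q1c0 ->]] [[p2 q2] /= [q2c0 ->]].
have E : p1%:F / q1%:F * (p2%:F / q2%:F) = (p1 * p2)%:F / (q1 * q2)%:F.
  by rewrite !tofracM mulf_div.
have qc0 : (q1 * q2).[c] != 0 by rewrite hornerM mulf_neq0.
split; first by exists (p1 * p2, q1 * q2).
by rewrite E !eval_at_frac // !hornerM mulf_div.
Qed.

Lemma regular_eval_atN r : regular_at c r ->
  regular_at c (- r) /\ eval_at c (- r) = - eval_at c r.
Proof.
move=> r_reg; have := regular_eval_atM (regular_at_poly (-1)) r_reg.
by rewrite eval_at_poly hornerN hornerC tofracN tofrac1 !mulN1r.
Qed.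

End Specialization.

Lemma pact_msym (R : rcfType) (n : nat) (w : 'S_n) (f : {mpoly Kt R [n]}) :
  pact w f = msym w^-1 f.
Proof.
rewrite /pact /msym /comp_mpoly /mmap; apply: eq_bigr => m _; congr (_ * _).
by apply: mmap1_eq => i; rewrite tnth_mktuple.
Qed.

Section Evaluation.
Variables (R : rcfType) (c : complex R) (n : nat).
Local Notation K := (Kt R).
Implicit Types (p q f : {mpoly K[n]}) (a : K) (v : 'I_n -> complex R).

Definition regular_mpoly p := forall m, regular_at c p@_m.

Lemma regular_mpolyD p q : regular_mpoly p -> regular_mpoly q -> regular_mpoly (p + q).
Proof. by move=> p_reg q_reg m; rewrite mcoeffD; case: (regular_eval_atD (p_reg m) (q_reg m)). Qed.

Lemma regular_mpolyN p : regular_mpoly p -> regular_mpoly (- p).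
Proof. by move=> p_reg m; rewrite mcoeffN; case: (regular_eval_atN (p_reg m)). Qed.

Lemma regular_mpolyB p q : regular_mpoly p -> regular_mpoly q -> regular_mpoly (p - q).
Proof. by move=> p_reg q_reg; apply/regular_mpolyD/regular_mpolyN. Qed.

Lemma regular_mpolyM p q : regular_mpoly p -> regular_mpoly q -> regular_mpoly (p * q).
Proof.
move=> p_reg q_reg m; rewrite mcoeffM.
apply: (big_ind (regular_at c)) => [|x y x_reg y_reg|i _].
- exact: (regular_at_nat c 0).
- by case: (regular_eval_atD x_reg y_reg).
- by case: (regular_eval_atM (p_reg i.1) (q_reg i.2)).
Qed.

Lemma regular_mpolyZX a (m : 'X_{1..n}) : regular_at c a -> regular_mpoly (a *: 'X_[m]).
Proof.
move=> a_reg m'; rewrite mcoeffZ mcoeffX.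
by case: (regular_eval_atM a_reg (regular_at_nat c (m == m'))).
Qed.

Lemma regular_mpolyC a : regular_at c a -> regular_mpoly a%:MP.
Proof. by move=> a_reg; rewrite -[a%:MP]mulr1 mul_mpolyC -mpolyX0; apply: regular_mpolyZX. Qed.

Lemma regular_mpolyX (i : 'I_n) : regular_mpoly 'X_i.
Proof. by move=> m; rewrite mcoeffX; apply: regular_at_nat. Qed.

Lemma regular_mpoly_msym (s : 'S_n) f : regular_mpoly f -> regular_mpoly (msym s f).
Proof. by move=> f_reg m; rewrite mcoeff_sym. Qed.

Lemma regular_mpoly_pact (w : 'S_n) f : regular_mpoly f -> regular_mpoly (pact w f).
Proof. by rewrite pact_msym; apply: regular_mpoly_msym. Qed.

Lemma evalFE v p k : (msize p <= k)%N ->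
  evalF c v p = \sum_(m : 'X_{1..n < k}) eval_at c p@_m * mmap1 v m.
Proof.
move=> le_pk; rewrite /evalF (big_mksub 'X_{1..n < k}) ?msupp_uniq //=; last first.
  by move=> m /msize_mdeg_lt /leq_trans; apply.
rewrite big_rmcond //= => m /memN_msupp_eq0 ->.
by rewrite (eval_at_nat c 0) mul0r.
Qed.

Lemma evalF_ext v v' f : v =1 v' -> evalF c v f = evalF c v' f.
Proof. by move=> Ev; apply: eq_bigr => m _; congr (_ * _); apply: mmap1_eq. Qed.

Lemma evalFD v p q : regular_mpoly p -> regular_mpoly q ->
  evalF c v (p + q) = evalF c v p + evalF c v q.
Proof.
move=> p_reg q_reg; pose k := (msize p + msize q + msize (p + q))%N.
rewrite !(@evalFE _ _ k) /k; try lia.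
rewrite -big_split; apply: eq_bigr => m _.
by rewrite mcoeffD (regular_eval_atD (p_reg m) (q_reg m)).2 mulrDl.
Qed.

Lemma evalFN v p : regular_mpoly p -> evalF c v (- p) = - evalF c v p.
Proof.
move=> p_reg; pose k := (msize p + msize (- p))%N.
rewrite !(@evalFE _ _ k) ?leq_addl ?leq_addr // -sumrN.
by apply: eq_bigr => m _; rewrite mcoeffN (regular_eval_atN (p_reg m)).2 mulNr.
Qed.

Lemma evalFB v p q : regular_mpoly p -> regular_mpoly q ->
  evalF c v (p - q) = evalF c v p - evalF c v q.
Proof. by move=> p_reg q_reg; rewrite evalFD ?evalFN //; apply: regular_mpolyN. Qed.

Lemma evalF_sum v (I : Type) (r : seq I) (P : pred I) (G : I -> {mpoly K[n]}) :
  (forall i, P i -> regular_mpoly (G i)) ->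
  evalF c v (\sum_(i <- r | P i) G i) = \sum_(i <- r | P i) evalF c v (G i).
Proof.
move=> G_reg; pose Q p y := regular_mpoly p /\ evalF c v p = y.
suff [] : Q (\sum_(i <- r | P i) G i) (\sum_(i <- r | P i) evalF c v (G i)) by [].
apply: (big_ind2 Q) => [|p1 p2 y1 y2 [p1_reg <-] [p2_reg <-]|i Pi].
- split; first by apply: regular_mpolyC; apply: (regular_at_nat c 0).
  by rewrite /evalF msupp0 big_nil.
- by split; [apply: regular_mpolyD | apply: evalFD].
- by split=> //; apply: G_reg.
Qed.

Lemma evalFZX v a (m : 'X_{1..n}) : regular_at c a ->
  evalF c v (a *: 'X_[m]) = eval_at c a * mmap1 v m.
Proof.
move=> a_reg; have [->|a_neq0] := eqVneq a 0.
  by rewrite scale0r /evalF msupp0 big_nil (eval_at_nat c 0) mul0r.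
by rewrite /evalF msuppMCX // big_seq1 mcoeffZ mcoeffX eqxx mulr1.
Qed.

Lemma evalFM v p q : regular_mpoly p -> regular_mpoly q ->
  evalF c v (p * q) = evalF c v p * evalF c v q.
Proof.
move=> p_reg q_reg; pose k := (msize p + msize q)%N.
have coefM_reg m1 m2 := regular_eval_atM (p_reg m1) (q_reg m2).
rewrite (@mpolywME _ _ _ _ k) ?leq_addl ?leq_addr //.
rewrite evalF_sum => [|[m1 m2] _]; last by apply: regular_mpolyZX; case: (coefM_reg m1 m2).
rewrite !(@evalFE _ _ k) ?leq_addl ?leq_addr // big_distrlr /= pair_bigA.
apply: eq_bigr => -[m1 m2] _ /=; rewrite evalFZX; last by case: (coefM_reg m1 m2).
rewrite (coefM_reg m1 m2).2 commr_mmap1_M; last by move=> i x; apply: mulrC.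
by rewrite mulrACA.
Qed.

Lemma evalFC v a : regular_at c a -> evalF c v a%:MP = eval_at c a.
Proof.
move=> a_reg; rewrite -[a%:MP]mulr1 mul_mpolyC -mpolyX0 evalFZX //.
by rewrite mmap11 mulr1.
Qed.

Lemma evalFX v (i : 'I_n) : evalF c v 'X_i = v i.
Proof.
rewrite -[X in evalF _ _ X]scale1r evalFZX; last exact: (regular_at_nat c 1).
by rewrite (eval_at_nat c 1) mul1r mmap1U.
Qed.

Lemma evalF_msym v (s : 'S_n) f : regular_mpoly f ->
  evalF c v (msym s f) = evalF c (fun i => v (s i)) f.
Proof.
move=> f_reg; rewrite (msymE s (leqnn (msize f))) evalF_sum => [|m _]; last first.
  exact: regular_mpolyZX.
rewrite (@evalFE _ _ (msize f)) //; apply: eq_bigr => m _.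
rewrite evalFZX //; congr (_ * _).
rewrite /mmap1 (reindex_inj (@perm_inj _ s)) /=.
by apply: eq_bigr => i _; rewrite mnmE permK.
Qed.

Lemma evalF_pact v (w : 'S_n) f : regular_mpoly f ->
  evalF c v (pact w f) = evalF c (fun i => v (w^-1%g i)) f.
Proof. by move=> f_reg; rewrite pact_msym evalF_msym. Qed.

End Evaluation.

Section Exchange.
Variables (R : rcfType) (t : R) (n : nat).
Local Notation c := (t%:C)%C.
Local Notation ev := (evalF c).

Local Hint Resolve regular_mpolyD regular_mpolyB regular_mpolyM regular_mpolyC
  regular_mpolyX regular_mpoly_pact regular_at_tK : core.

Lemma evalF_Trel (z : 'I_n -> complex R) (i : 'I_n) (f g : {mpoly Kt R [n]}) :
  regular_mpoly c f -> regular_mpoly c g -> Trel i f g ->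
  (z i - z (ordS i)) * (c * ev z f - ev z g)
  = (c * z i - z (ordS i)) * (ev z f - ev (fun k => z (sbar i k)) f).
Proof.
move=> f_reg g_reg /(congr1 (ev z)).
rewrite !(evalFM, evalFB, evalFX, evalFC, evalF_pact) ?eval_at_tK /sbar ?tpermV //.
all: by auto.
Qed.

End Exchange.

Section Rearrangements.
Variable n : nat.
Implicit Types (w : 'S_n) (x : seq nat).

Lemma size_sact w x : size (sact w x) = n.
Proof. by rewrite size_map size_enum_ord. Qed.

Lemma nth_sact w x (k : 'I_n) : nth 0%N (sact w x) k = nth 0%N x (w^-1%g k).
Proof. by rewrite (nth_map k) ?size_enum_ord // nth_ord_enum. Qed.

Lemma sact_sbarK (i : 'I_n) x : size x = n -> sact (sbar i) (sact (sbar i) x) = x.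
Proof.
move=> size_x; apply: (@eq_from_nth _ 0%N) => [|k]; first by rewrite size_sact.
rewrite size_sact => lt_kn; have -> : k = Ordinal lt_kn by [].
by rewrite !nth_sact /sbar tpermV tpermK.
Qed.

Lemma perm_sact w x : size x = n -> perm_eq (sact w x) x.
Proof.
move=> size_x; have {2}-> : x = [seq nth 0%N x i | i : 'I_n <- enum 'I_n].
  by rewrite -[in LHS](mkseq_nth 0%N x) size_x /mkseq -val_enum_ord -map_comp.
have -> : sact w x = [seq nth 0%N x i | i : 'I_n <- [seq w^-1%g i | i <- enum 'I_n]].
  by rewrite -map_comp.
apply: perm_map.
apply: uniq_perm => [||k].
- by rewrite map_inj_uniq ?enum_uniq //; apply: perm_inj.
- exact: enum_uniq.
- by rewrite mem_enum; apply/mapP; exists (w k); rewrite ?mem_enum ?permK.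
Qed.

End Rearrangements.

Section Transitions.
Variables (n : nat) (rho : 'I_n -> nat) (sh : 'S_n).

Lemma asc_ordS_neq (i : 'I_n) : asc rho sh i -> i != ordS i.
Proof. by apply: contraTneq; rewrite /asc => <-; rewrite ltnn. Qed.

Lemma lmul_neq (i : 'I_n) : asc rho sh i -> lmul i sh != sh.
Proof.
move=> asc_i; apply/eqP => /(congr1 (fun s : 'S_n => s (sh^-1%g i))).
rewrite permM permKV /sbar tpermL => /eqP.
by rewrite eq_sym (negbTE (asc_ordS_neq asc_i)).
Qed.

Lemma lmul_inj (i j : 'I_n) : asc rho sh i -> asc rho sh j ->
  lmul i sh = lmul j sh -> i = j.
Proof.
move=> asc_i asc_j /mulgI /(congr1 (fun s : 'S_n => s i)).
rewrite /sbar tpermL; case: tpermP => [//|ordSj_i ordSi_j|_ _ ordSi_i].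
  move: asc_i asc_j; rewrite /asc -ordSj_i ordSi_j => lt_ij lt_ji.
  by have := ltn_trans lt_ij lt_ji; rewrite ltnn.
by have := asc_ordS_neq asc_i; rewrite -{1}ordSi_i eqxx.
Qed.

Lemma spt_lmul (R : rcfType) (chi : 'I_n -> R) (i : 'I_n) :
  spt chi (lmul i sh) =1 (fun k => spt chi sh (sbar i k)).
Proof. by move=> k; rewrite /spt /lmul invMg permM /sbar tpermV. Qed.

End Transitions.

(* [n] times the probability that the stoned ASEP exchanges the entries [a], [b] across an
   ascent of densities with rate [p]. *)
Definition swap_weight (R : rcfType) (t p : R) (a b : nat) : R :=
  if a != b then p * ff t a b else 0.

Section TransitionProbabilities.
Variables (R : rcfType) (n : nat) (rho : 'I_n -> nat) (chi : 'I_n -> R) (t : R).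
Variable sh : 'S_n.
Local Notation stay := (1 - (Kcount rho sh)%:R / n%:R : R).

Lemma aux_prob_diag : aux_prob R rho sh sh = stay.
Proof.
rewrite /aux_prob eqxx big1 ?addr0 // => i asc_i.
by rewrite eq_sym (negbTE (lmul_neq asc_i)).
Qed.

Lemma aux_prob_lmul (i : 'I_n) : asc rho sh i -> aux_prob R rho sh (lmul i sh) = n%:R^-1.
Proof.
move=> asc_i; rewrite /aux_prob (negbTE (lmul_neq asc_i)) add0r (bigD1 i) //= eqxx.
rewrite big1 ?addr0 // => j /andP[asc_j ne_ji].
by case: eqP => // /(lmul_inj asc_i asc_j) eq_ij; rewrite eq_ij eqxx in ne_ji.
Qed.

Lemma aux_prob_support (s : 'S_n) : s != sh -> aux_prob R rho sh s != 0 ->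
  exists2 i, asc rho sh i & s = lmul i sh.
Proof.
move=> ne_s; rewrite /aux_prob (negbTE ne_s) add0r.
have [i /andP[asc_i /eqP ->] _|no_step] := pickP (fun i => asc rho sh i && (s == lmul i sh)).
  by exists i.
by rewrite big1 ?eqxx // => i asc_i; have := no_step i; rewrite asc_i /= => ->.
Qed.

Lemma asep_prob_diag (mh mu : seq nat) :
  asep_prob rho chi t mh sh mu sh = if mu == mh then stay else 0.
Proof.
rewrite /asep_prob eqxx andbT big1 ?addr0 // => i asc_i.
by rewrite [sh == _]eq_sym (negbTE (lmul_neq asc_i)) !andbF; case: ifP; rewrite ?addr0.
Qed.

Lemma asep_prob_lmul (i : 'I_n) (mh mu : seq nat) : asc rho sh i ->
  let p := pfun t chi (sh^-1%g i) (sh^-1%g (ordS i)) in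
  let w := swap_weight t p (nth 0%N mh i) (nth 0%N mh (ordS i)) in
  asep_prob rho chi t mh sh mu (lmul i sh)
  = n%:R^-1 * ((if mu == sact (sbar i) mh then w else 0) + (if mu == mh then 1 - w else 0)).
Proof.
move=> asc_i p w; rewrite /asep_prob (negbTE (lmul_neq asc_i)) andbF add0r.
rewrite (bigD1 i) // big1 => [|j /andP[asc_j ne_ji]]; last first.
  have /negbTE ne_lmul : lmul i sh != lmul j sh.
    by apply: contra_neq ne_ji => /(lmul_inj asc_i asc_j) ->.
  by cbv zeta; rewrite !ne_lmul !andbF; case: ifP; rewrite ?addr0.
cbv zeta; rewrite eqxx !andbT -/p /w /swap_weight.
set a := nth 0%N mh i; set b := nth 0%N mh (ordS i) => /=.
by case: (a != b); case: (mu == _); case: (mu == mh); rewrite ?if_same; ring.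
Qed.

End TransitionProbabilities.

Lemma sum_if_eq (C : pzSemiRingType) (T : eqType) (r : seq T) (x : T) (a : C) (G : T -> C) :
  uniq r -> x \in r -> \sum_(y <- r) (if x == y then a else 0) * G y = a * G x.
Proof.
move=> uniq_r x_in_r; rewrite (big_rem x) //= eqxx big1_seq ?addr0 // => y /andP[_].
by rewrite mem_rem_uniq // inE eq_sym => /andP[/negbTE -> _]; rewrite mul0r.
Qed.

Section TransitionSums.
Variables (R : rcfType) (n : nat) (rho : 'I_n -> nat) (chi : 'I_n -> R) (t : R).
Variables (sh : 'S_n) (lambda mu : seq nat) (G : seq nat -> complex R).
Hypotheses (size_lambda : size lambda = n) (mu_perm : perm_eq mu lambda).

Lemma sum_asep_prob_diag :
  \sum_(mh <- permutations lambda) (asep_prob rho chi t mh sh mu sh)%:C%C * G mh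
  = ((1 - (Kcount rho sh)%:R / n%:R)%:C)%C * G mu.
Proof.
under eq_bigr do rewrite asep_prob_diag (fun_if (real_complex R)) rmorph0.
by rewrite sum_if_eq ?permutations_uniq ?mem_permutations.
Qed.

Lemma sum_asep_prob_lmul (i : 'I_n) : asc rho sh i ->
  let p := pfun t chi (sh^-1%g i) (sh^-1%g (ordS i)) in
  let a := nth 0%N mu i in
  let b := nth 0%N mu (ordS i) in
  \sum_(mh <- permutations lambda) (asep_prob rho chi t mh sh mu (lmul i sh))%:C%C * G mh
  = (n%:R^-1)%:C%C * (((1 - swap_weight t p a b)%:C)%C * G mu
                      + (swap_weight t p b a)%:C%C * G (sact (sbar i) mu)).
Proof.
move=> asc_i p a b; set nu := sact (sbar i) mu.
have size_mu : size mu = n by rewrite (perm_size mu_perm).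
rewrite (eq_big_seq (fun mh => (n%:R^-1)%:C%C *
    ((if nu == mh then (swap_weight t p b a)%:C%C else 0) * G mh
     + (if mu == mh then ((1 - swap_weight t p a b)%:C)%C else 0) * G mh))) => [|mh]; last first.
  rewrite mem_permutations => /perm_size; rewrite size_lambda => size_mh.
  rewrite asep_prob_lmul // -/p.
  have -> : (mu == sact (sbar i) mh) = (nu == mh).
    by rewrite /nu; apply/eqP/eqP => [->|<-]; rewrite sact_sbarK.
  set w := swap_weight t p (nth 0%N mh i) (nth 0%N mh (ordS i)).
  have -> : (if nu == mh then w else 0) = (if nu == mh then swap_weight t p b a else 0).
    by rewrite /w; case: eqP => // <-; rewrite !nth_sact /sbar tpermV tpermL tpermR.
  have -> : (if mu == mh then 1 - w else 0) = (if mu == mh then 1 - swap_weight t p a b else 0).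
    by rewrite /w; case: eqP => // <-.
  move: (swap_weight t p b a) (swap_weight t p a b) => x y.
  by case: (nu == mh); case: (mu == mh); rewrite /= ?(rmorphM, rmorphD, rmorph0); ring.
rewrite -big_distrr big_split /= !sum_if_eq ?permutations_uniq ?mem_permutations //.
  by rewrite addrC.
by apply: perm_trans mu_perm; apply: perm_sact.
Qed.

End TransitionSums.

(* [A], [B] are F_mu and F_{s_i mu} at x, [A'], [B'] the same at s_i x, and [u], [v] are
   x_i, x_{i+1}; the hypotheses on them are the exchange relation evaluated at x and s_i x. *)
Section BalanceIdentities.
Variable K : fieldType.

Lemma balance_ascent (c u v p A B A' : K) :
  p * (c * u - v) = u - v -> c * u - v != 0 ->
  (u - v) * (c * A - B) = (c * u - v) * (A - A') ->
  (1 - p * c) * A + p * B = A'.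
Proof.
move=> p_def nz_cuv E.
have {}p_def : p = (u - v) / (c * u - v) by rewrite -p_def mulfK.
have A'_def : A' = A - (u - v) * (c * A - B) / (c * u - v).
  by rewrite E mulrAC mulfV // mul1r opprB addrC subrK.
by rewrite A'_def p_def; field.
Qed.

Lemma balance_descent (c u v p A B A' B' : K) :
  p * (c * u - v) = u - v -> c * u - v != 0 -> (u = v -> A' = A) ->
  (u - v) * (c * B - A) = (c * u - v) * (B - B') ->
  (v - u) * (c * B' - A') = (c * v - u) * (B' - B) ->
  (1 - p) * A + p * c * B = A'.
Proof.
move=> p_def nz_cuv A'_uv E1 E2; have [eq_uv|ne_uv] := eqVneq u v.
  have p0 : p = 0 by apply: (mulIf nz_cuv); rewrite p_def eq_uv subrr mul0r.
  by rewrite p0 A'_uv //; ring.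
have nz_vu : v - u != 0 by rewrite subr_eq0 eq_sym.
have {}p_def : p = (u - v) / (c * u - v) by rewrite -p_def mulfK.
have B'_def : B' = B - (u - v) * (c * B - A) / (c * u - v).
  by rewrite E1 mulrAC mulfV // mul1r opprB addrC subrK.
have A'_def : A' = c * B' - (c * v - u) * (B' - B) / (v - u).
  by rewrite -E2 mulrAC mulfV // mul1r opprB addrC subrK.
by rewrite A'_def B'_def p_def; field; rewrite nz_vu nz_cuv.
Qed.

End BalanceIdentities.

Section LocalBalance.
Variables (R : rcfType) (t : R) (n : nat) (lambda : seq nat).
Variable F : seq nat -> {mpoly Kt R [n]}.
Hypotheses (size_lambda : size lambda = n) (F_family : asep_family lambda F).
Hypothesis F_reg : forall nu, perm_eq nu lambda -> regular_mpoly (t%:C)%C (F nu).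
Local Notation c := ((t%:C)%C : complex R).

Lemma evalF_balance (x : 'I_n -> complex R) (p : R) (i : 'I_n) (mu : seq nat) :
  perm_eq mu lambda ->
  p%:C%C * (c * x i - x (ordS i)) = x i - x (ordS i) -> c * x i - x (ordS i) != 0 ->
  let a := nth 0%N mu i in
  let b := nth 0%N mu (ordS i) in
  ((1 - swap_weight t p a b)%:C)%C * evalF c x (F mu)
    + (swap_weight t p b a)%:C%C * evalF c x (F (sact (sbar i) mu))
  = evalF c (fun k => x (sbar i k)) (F mu).
Proof.
move=> mu_perm p_def nz_cuv a b; case: F_family => _ _ F_Trel F_sym _.
set nu := sact (sbar i) mu.
have size_mu : size mu = n by rewrite (perm_size mu_perm).
have nu_perm : perm_eq nu lambda by apply: perm_trans mu_perm; apply: perm_sact.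
have nu_i : nth 0%N nu i = b by rewrite nth_sact /sbar tpermV tpermL.
have nu_ordS : nth 0%N nu (ordS i) = a by rewrite nth_sact /sbar tpermV tpermR.
rewrite /swap_weight /ff; case: (ltngtP a b) => [lt_ab|lt_ba|eq_ab] /=.
- rewrite mulr1 rmorphB rmorph1 rmorphM.
  exact: balance_ascent p_def nz_cuv (evalF_Trel x (F_reg mu_perm) (F_reg nu_perm) (F_Trel _ _ mu_perm lt_ab)).
- rewrite mulr1 rmorphB rmorph1 !rmorphM.
  have Trel_nu : Trel i (F nu) (F mu).
    by move: (F_Trel nu i nu_perm); rewrite nu_i nu_ordS /nu sact_sbarK // => /(_ lt_ba).
  apply: balance_descent p_def nz_cuv _
    (evalF_Trel x (F_reg nu_perm) (F_reg mu_perm) Trel_nu) _.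
  + move=> eq_x; apply: evalF_ext => k; rewrite /sbar.
    by case: tpermP => [->|->|].
  + have := evalF_Trel (fun k => x (sbar i k)) (F_reg nu_perm) (F_reg mu_perm) Trel_nu.
    rewrite /sbar tpermL tpermR; congr (_ = _ * (_ - _)).
    by apply: evalF_ext => k; rewrite tpermK.
- have := evalF_pact x (sbar i) (F_reg mu_perm).
  rewrite F_sym // /sbar tpermV => <-.
  by rewrite subr0 rmorph1 rmorph0 mul1r mul0r addr0.
Qed.

End LocalBalance.

Section PointRates.
Variables (R : rcfType) (n : nat) (t : R) (chi : 'I_n -> R) (sh : 'S_n) (i : 'I_n).
Let j := sh^-1%g i.
Let j' := sh^-1%g (ordS i).
Hypothesis nz_tchi : t * chi j - chi j' != 0.

Lemma spt_denom_neq0 : t%:C%C * spt chi sh i - spt chi sh (ordS i) != 0.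
Proof. by rewrite /spt -rmorphM -rmorphB fmorph_eq0. Qed.

Lemma spt_pfun : (pfun t chi j j')%:C%C * (t%:C%C * spt chi sh i - spt chi sh (ordS i))
  = spt chi sh i - spt chi sh (ordS i).
Proof. by rewrite /spt -rmorphM -!rmorphB -rmorphM /pfun divfK. Qed.

End PointRates.

Theorem lemma4p4 (R : rcfType) (n m : nat) (rho : 'I_n -> nat) (chi : 'I_n -> R)
  (t : R) (lambda : seq nat) (F : seq nat -> {mpoly Kt R [n]})
  (sigma sigmah : 'S_n) (mu : seq nat) :
  (2 <= m)%N ->
  (forall j, 1 <= rho j <= m)%N ->
  (forall k, (1 <= k <= m)%N -> exists j, rho j = k) ->
  (forall j j' : 'I_n, (j <= j')%N -> (rho j <= rho j')%N) ->
  (forall j : 'I_n, val j = 0%N -> rho j = 1%N) ->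
  (forall j : 'I_n, val j = n.-1 -> rho j = m) ->
  0 <= t < 1 ->
  (forall j, chi j != 0) ->
  (forall j j', (rho j < rho j')%N ->
     t * chi j - chi j' != 0 /\ 0 <= pfun t chi j j' < 1) ->
  size lambda = n -> sorted leq lambda ->
  asep_family lambda F ->
  (forall nu, perm_eq nu lambda -> forall mm, regular_at (t%:C)%C (F nu)@_mm) ->
  in_Omega rho sigma -> in_Omega rho sigmah ->
  0 < aux_prob R rho sigmah sigma ->
  perm_eq mu lambda ->
  \sum_(mh <- permutations lambda)
     (asep_prob rho chi t mh sigmah mu sigma)%:C%C
       * evalF (t%:C)%C (spt chi sigmah) (F mh)
  = evalF (t%:C)%C (spt chi sigma) (F mu) * (aux_prob R rho sigmah sigma)%:C%C.
Proof.
move=> _ _ _ _ _ _ _ _ chi_ratio size_lambda _ F_family F_reg _ _ aux_pos mu_perm.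
have [-> | ne_sigma] := eqVneq sigma sigmah.
  by rewrite sum_asep_prob_diag // aux_prob_diag mulrC.
have [i asc_i ->] := aux_prob_support ne_sigma (lt0r_neq0 aux_pos).
have [nz_tchi _] := chi_ratio _ _ asc_i.
rewrite sum_asep_prob_lmul // aux_prob_lmul // mulrC (evalF_ext _ (F mu) (spt_lmul _ _ _)).
congr (_ * _); apply: (evalF_balance size_lambda F_family F_reg mu_perm).
  exact: spt_pfun.
exact: spt_denom_neq0.
Qed.
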